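(* Let $G=(V,E)$ be a network as in the context, let $\xi\subseteq E$ be an edge subset, $t$ a sink node, and $r$ an integer with $\mathrm{mincut}(\xi,t)\le r\le C_t$. Then there exists an edge subset $\eta\subseteq E$ with $|\eta|=r$ that is primary for $t$ and such that $\eta$ is a cut separating $t$ from $\xi$.
   Context: Network: $G=(V,E)$ is a finite directed acyclic graph (parallel edges allowed) with a single source node $s$ and a set of sink nodes $T\subseteq V\setminus\{s\}$; $s$ has no incoming edges and sinks have no outgoing edges. A directed path is a sequence of edges $(e_1,\dots,e_m)$, $m\ge1$, with tail of $e_{k+1}$ equal to head of $e_k$. A cut separating node $v$ from node $u$ is a set of edges whose removal leaves no directed path from $u$ to $v$; $C_t$ is the minimum size of a cut separating sink $t$ from $s$. For $\xi\subseteq E$ and a node $u$, $A\subseteq E$ is a cut separating $u$ from $\xi$ if every directed path in $G$ whose first edge lies in $\xi$ and whose last edge has head $u$ contains an edge of $A$ (equivalently, $A$ separates $\xi$ from $u$ in the reversed network). $\mathrm{mincut}(\xi,u)$ is the minimum size of such a cut; a cut of that size is a minimum cut separating $u$ from $\xi$. A minimum cut separating $u$ from $\xi$ is primary if it separates $u$ from every minimum cut separating $u$ from $\xi$; it exists and is unique. An edge subset $\eta$ is primary for $u$ if $\eta$ is the primary minimum cut separating $u$ from $\eta$. *)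

From mathcomp Require Import all_boot.
From mathcomp Require Import boolp.
Set Implicit Arguments. Unset Strict Implicit. Unset Printing Implicit Defensive.

(* A network: finite node type V, finite edge type E (parallel edges allowed),
   each edge e goes from node [tl e] to node [hd e]. *)
Section Network.
Variables (V E : finType) (tl hd : E -> V).

Definition is_dpath (p : seq E) : bool :=
  if p is e :: q then path (fun a b => hd a == tl b) e q else false.

(* first and last edges of a path (default value irrelevant for nonempty p) *)
Definition first_edge (e0 : E) (p : seq E) : E := head e0 p.
Definition last_edge (e0 : E) (p : seq E) : E := last e0 p.

Definition path_from_to (u v : V) (p : seq E) : Prop :=
  is_dpath p /\ exists e0, tl (first_edge e0 p) = u /\ hd (last_edge e0 p) = v.

Definition acyclic : Prop := forall (v : V) (p : seq E), ~ path_from_to v v p.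

Definition node_cut (u v : V) (A : {set E}) : Prop :=
  forall p, path_from_to u v p -> exists2 e, e \in p & e \in A.

Definition min_node_cut (s t : V) : nat :=
  \big[minn/#|E|]_(A : {set E} | `[< node_cut s t A >]) #|A|.

Definition edge_cut (xi : {set E}) (u : V) (A : {set E}) : Prop :=
  forall p, is_dpath p ->
    (exists e0, first_edge e0 p \in xi /\ hd (last_edge e0 p) = u) ->
    exists2 e, e \in p & e \in A.

Definition mincut (xi : {set E}) (u : V) : nat :=
  \big[minn/#|E|]_(A : {set E} | `[< edge_cut xi u A >]) #|A|.

Definition min_edge_cut (xi : {set E}) (u : V) (A : {set E}) : Prop :=
  edge_cut xi u A /\ #|A| = mincut xi u.

Definition primary_cut (xi : {set E}) (u : V) (A : {set E}) : Prop :=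
  min_edge_cut xi u A /\ forall B, min_edge_cut xi u B -> edge_cut B u A.

Definition primary_for (u : V) (eta : {set E}) : Prop :=
  primary_cut eta u eta.

End Network.

From mathcomp Require Import all_boot all_order.
From mathcomp Require Import boolp.
Set Implicit Arguments. Unset Strict Implicit. Unset Printing Implicit Defensive.
Import Order.TTheory.

(* Deleting one edge from a source set lowers its min cut by at most one, so as
   the source set grows from [xi] to all of [E] the min cut passes through every
   value between mincut(xi, t) and mincut(E, t) >= C_t: some [A0] containing
   [xi] has min cut exactly [r].  Among the cuts [A] separating [t] from [xi]
   with mincut(A, t) = r, pick one whose upstream set (the edges [e] that [A]
   separates from [t]) is largest, and let [eta] be a minimum cut separating [t]
   from [A].  A minimum cut [B] separating [t] from [eta] is again such a set,
   and its upstream set contains that of [eta], which contains that of [A]; by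
   maximality they coincide.  As [B] lies in its own upstream set, [eta]
   separates [t] from [B], i.e. [eta] is primary. *)

Section MinCard.
Variables (T : finType) (P : {set T} -> Prop).

Lemma min_card_le B :
  P B -> \big[minn/#|T|]_(A : {set T} | `[< P A >]) #|A| <= #|B|.
Proof.
rewrite -minEnat => PB.
by apply: (@bigmin_le_cond _ nat); apply/asboolP.
Qed.

Lemma min_card_attained B0 :
  P B0 -> exists2 B, P B & #|B| = \big[minn/#|T|]_(A : {set T} | `[< P A >]) #|A|.
Proof.
move=> /asboolT PB0.
rewrite -minEnat (@bigmin_eq_arg _ nat _ _ B0 _ _ PB0) => [|A _]; last exact: max_card.
by case: arg_minP => // A /asboolP PA _; exists A.
Qed.

End MinCard.

Section UnitStepIntermediateValue.
Variables (T : finType) (f : {set T} -> nat).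
Hypothesis f_setD1 : forall A x, f A <= (f (A :\ x)).+1.

Lemma set_intermediate_value (X A : {set T}) r :
  X \subset A -> f X <= r <= f A -> exists2 B : {set T}, X \subset B & f B = r.
Proof.
move=> + /andP[fX_r]; have [n] := ubnP #|A :\: X|.
elim: n A => // n IH A lt_n sXA r_fA.
have [/eqP|[x]] := set_0Vmem (A :\: X).
  rewrite setD_eq0 => sAX; have eAX : A = X by apply/eqP; rewrite eqEsubset sAX.
  by exists A; rewrite ?eAX //; apply/eqP; rewrite eqn_leq fX_r -eAX.
rewrite in_setD => /andP[xNX xA].
have [r_fAx | fAx_r] := leqP r (f (A :\ x)); last first.
  by exists A => //; apply/eqP; rewrite eqn_leq r_fA (leq_trans (f_setD1 A x)).
apply: IH r_fAx; last by rewrite subsetD1 sXA.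
rewrite setDDl setUC -setDDl -ltnS (leq_trans _ lt_n) // ltnS proper_card //.
by rewrite properD1 // in_setD xNX.
Qed.

End UnitStepIntermediateValue.

Section EdgeCuts.
Variables (V E : finType) (tl hd : E -> V).

Local Notation is_dpath := (is_dpath tl hd).
Local Notation edge_cut := (edge_cut tl hd).
Local Notation mincut := (mincut tl hd).
Local Notation min_edge_cut := (min_edge_cut tl hd).
Local Notation primary_for := (primary_for tl hd).

Lemma is_dpath_suffix p1 e p2 : is_dpath (p1 ++ e :: p2) -> is_dpath (e :: p2).
Proof. by case: p1 => //= x p1; rewrite cat_path => /andP[_ /andP[]]. Qed.

Lemma edge_cut_refl X u : edge_cut X u X.
Proof. by case=> // e p _ [e0 [Xe _]]; exists e; rewrite ?mem_head. Qed.

Lemma edge_cut_setT X u : edge_cut X u setT.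
Proof. by case=> // e p _ _; exists e; rewrite ?mem_head ?in_setT. Qed.

Lemma edge_cut_subl (X Y A : {set E}) u :
  Y \subset X -> edge_cut X u A -> edge_cut Y u A.
Proof.
move=> sYX cutX p dp [e0 [Ye hd_p]]; apply: cutX dp _.
by exists e0; split; first exact: (subsetP sYX).
Qed.

Lemma edge_cut_trans (X A B : {set E}) u :
  edge_cut X u A -> edge_cut A u B -> edge_cut X u B.
Proof.
move=> cutXA cutAB p dp hp; have [e ep eA] := cutXA p dp hp.
case/splitPr: ep dp hp => p1 p2 dp [e0 [_ hd_p]].
have [f fp fB] : exists2 f, f \in e :: p2 & f \in B.
  apply: cutAB (is_dpath_suffix dp) _; exists e; split => //.
  by rewrite /last_edge last_cat in hd_p.
by exists f; rewrite // mem_cat fp orbT.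
Qed.

Lemma edge_cut_setT_node_cut s t A : edge_cut setT t A -> node_cut tl hd s t A.
Proof. by move=> cutA p [dp [e0 [_ hd_p]]]; apply: cutA dp _; exists e0. Qed.

Lemma mincut_le X u B : edge_cut X u B -> mincut X u <= #|B|.
Proof. exact: min_card_le. Qed.

Lemma mincut_attained X u : exists2 B, edge_cut X u B & #|B| = mincut X u.
Proof. exact/min_card_attained/edge_cut_setT. Qed.

Lemma mincut_mono X A u : edge_cut X u A -> mincut X u <= mincut A u.
Proof.
move=> cutXA; have [B cutAB <-] := mincut_attained A u.
exact/mincut_le/(edge_cut_trans cutXA).
Qed.

Lemma mincut_min_edge_cut A u B : min_edge_cut A u B -> mincut B u = mincut A u.
Proof.
move=> [cutAB card_B]; apply/eqP; rewrite eqn_leq (mincut_mono cutAB) andbT.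
by rewrite -card_B; apply/mincut_le/edge_cut_refl.
Qed.

Lemma mincut_setD1 u X e : mincut X u <= (mincut (X :\ e) u).+1.
Proof.
have [B cutB <-] := mincut_attained (X :\ e) u.
apply: leq_trans (mincut_le (B := e |: B) _) _; last first.
  by rewrite cardsU1; case: (e \notin B).
case=> // f p dp [e0 [Xf hd_p]].
have [->|f_e] := eqVneq f e; first by exists e; rewrite ?mem_head ?setU11.
have [g gp gB] : exists2 g, g \in f :: p & g \in B.
  by apply: cutB dp _; exists e0; rewrite /first_edge /= in_setD1 f_e.
by exists g; rewrite // in_setU1 gB orbT.
Qed.

Lemma min_node_cut_le_mincut_setT s t : min_node_cut tl hd s t <= mincut setT t.
Proof.
have [B cutB <-] := mincut_attained setT t.
exact/min_card_le/edge_cut_setT_node_cut.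
Qed.

Definition upstream u (A : {set E}) : {set E} :=
  [set e | `[< edge_cut [set e] u A >]].

Lemma edge_cut_upstreamE X u A : edge_cut X u A <-> X \subset upstream u A.
Proof.
split=> [cutA | sXU].
  apply/subsetP => e Xe; rewrite inE; apply/asboolP.
  by apply: edge_cut_subl cutA; rewrite sub1set.
move=> p dp [e0 [Xp hd_p]].
move: (subsetP sXU _ Xp); rewrite inE => /asboolP cut_e.
by apply: cut_e dp _; exists e0; rewrite set11.
Qed.

Lemma upstream_sub u A B : edge_cut A u B -> upstream u A \subset upstream u B.
Proof.
move=> cutAB; apply/edge_cut_upstreamE/(edge_cut_trans _ cutAB).
exact/edge_cut_upstreamE.
Qed.

Lemma primary_for_upstream_max xi u eta :
    edge_cut xi u eta -> #|eta| = mincut eta u ->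
    (forall B, edge_cut xi u B -> mincut B u = mincut eta u ->
       #|upstream u B| <= #|upstream u eta|) ->
  primary_for u eta.
Proof.
move=> cut_eta card_eta max_eta.
split=> [|B min_B]; first by split; [exact: edge_cut_refl|].
have [cutB _] := min_B.
have up_eq : upstream u eta = upstream u B.
  apply/eqP; rewrite eqEcard upstream_sub //=.
  exact: max_eta (edge_cut_trans cut_eta cutB) (mincut_min_edge_cut min_B).
by apply/edge_cut_upstreamE; rewrite up_eq; apply/edge_cut_upstreamE/edge_cut_refl.
Qed.

Lemma exists_primary_cut xi u A0 :
  edge_cut xi u A0 ->
  exists eta : {set E}, [/\ #|eta| = mincut A0 u, primary_for u eta & edge_cut xi u eta].
Proof.
move=> cutA0.
pose P A := `[< edge_cut xi u A /\ mincut A u = mincut A0 u >].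
have PA0 : P A0 by exact/asboolP.
case: (arg_maxnP (fun A => #|upstream u A|) PA0) => A /asboolP[cutA mA] maxA.
have [eta cut_eta card_eta] := mincut_attained A u.
have m_eta : mincut eta u = mincut A u by exact: mincut_min_edge_cut.
have sub_up : upstream u A \subset upstream u eta by exact: upstream_sub.
have xi_eta : edge_cut xi u eta := edge_cut_trans cutA cut_eta.
exists eta; split=> //; first by rewrite card_eta mA.
apply: (primary_for_upstream_max xi_eta); first by rewrite card_eta m_eta.
move=> B cutB; rewrite m_eta => mB; apply: leq_trans (subset_leq_card sub_up).
by apply: maxA; apply/asboolP; rewrite mB.
Qed.

End EdgeCuts.

Theorem lemma9 (V E : finType) (tl hd : E -> V) (s : V) (T : {set V})
  (Hacyc : acyclic tl hd)
  (Hsrc : forall e : E, hd e != s)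
  (HT : s \notin T)
  (Hsink : forall (t : V) (e : E), t \in T -> tl e != t)
  (xi : {set E}) (t : V) (r : nat)
  (Ht : t \in T)
  (Hr1 : mincut tl hd xi t <= r) (Hr2 : r <= min_node_cut tl hd s t) :
  exists eta : {set E},
    #|eta| = r /\ primary_for tl hd t eta /\ edge_cut tl hd xi t eta.
Proof.
have r_le : r <= mincut tl hd setT t.
  exact: leq_trans Hr2 (min_node_cut_le_mincut_setT tl hd s t).
have [A0 xi_A0 mA0] := set_intermediate_value (mincut_setD1 tl hd t)
  (subsetT xi) (introT andP (conj Hr1 r_le)).
have cut_A0 : edge_cut tl hd xi t A0 by apply: edge_cut_subl xi_A0 _; exact: edge_cut_refl.
have [eta [card_eta primary_eta cut_eta]] := exists_primary_cut cut_A0.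
by exists eta; split; [rewrite card_eta mA0 | split].
Qed.
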